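(* Fix $\lambda_p,\lambda_s\in(0,1)$ and $p_q\in(0,1)$, and consider $p_a\in[0,1]$ ranging over values for which $(\lambda_p,\lambda_s)$ is in the stable region, i.e. $\lambda_p<\frac{f_{sd}(1-p_q)\mu_p}{f_{sd}(1-p_q)+p_a f_{ps}(1-f_{pd})}$ and $\lambda_s<p_q f_{sd}(1-\lambda_p/\mu_p)$ with $\mu_p=f_{pd}+p_a f_{ps}(1-f_{pd})$. Then the average PU delay $D_p$ is monotonically decreasing in $p_a$ if $p_q<1-\frac{f_{pd}}{f_{sd}}$, monotonically increasing in $p_a$ if $p_q>1-\frac{f_{pd}}{f_{sd}}$ (and constant in $p_a$ if $p_q=1-\frac{f_{pd}}{f_{sd}}$), while the average SU delay $D_s$ is monotonically decreasing in $p_a$ for every $p_q\in(0,1)$.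
   Context: Constants $f_{pd},f_{ps},f_{sd}\in(0,1)$ with $f_{pd}<f_{sd}$. Set $a=p_a f_{ps}(1-f_{pd})$, $\mu_p=f_{pd}+a$. $D_p=(N_p+N_{sp})/\lambda_p$ and $D_s=N_s/\lambda_s$, where $N_p=\frac{\lambda_p-\lambda_p^2}{\mu_p-\lambda_p}$, $N_{sp}=\frac{m\lambda_p^2+n\lambda_p}{\alpha\lambda_p^2+\beta\lambda_p+\gamma}$, $N_s=\frac{\lambda_p\lambda_s A+(\lambda_s^2-\lambda_s)B(B+\lambda_p)}{BC}$ with $m=a\big[\frac{(1-p_q)f_{sd}-f_{pd}}{\mu_p}-(1-p_q)f_{sd}-a\big]$, $n=a\mu_p$, $\alpha=(1-p_q)f_{sd}+a$, $\beta=\mu_p[-2(1-p_q)f_{sd}-a]$, $\gamma=(1-p_q)f_{sd}\mu_p^2$, $A=p_q f_{sd}(\mu_p-1)$, $B=\mu_p-\lambda_p$, $C=(\lambda_s-p_q f_{sd})\mu_p+p_q f_{sd}\lambda_p$. These are the average packet delays of the PU and SU in a cognitive relaying system where the SU serves its own queue w.p. $p_q$ (relay queue w.p. $1-p_q$) when the PU is idle, and admits undelivered overheard PU packets to its relay queue w.p. $p_a$. *)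

From Stdlib Require Import Reals Lra.
Open Scope R_scope.

Definition a_ (fpd fps pa : R) : R := pa * fps * (1 - fpd).
Definition mu_p (fpd fps pa : R) : R := fpd + a_ fpd fps pa.

Definition N_p (fpd fps lp pa : R) : R :=
  (lp - lp ^ 2) / (mu_p fpd fps pa - lp).

Definition N_sp (fpd fps fsd lp pq pa : R) : R :=
  let a := a_ fpd fps pa in
  let mu := mu_p fpd fps pa in
  let m := a * (((1 - pq) * fsd - fpd) / mu - (1 - pq) * fsd - a) in
  let n := a * mu in
  let alpha := (1 - pq) * fsd + a in
  let beta := mu * (- 2 * (1 - pq) * fsd - a) in
  let gamma := (1 - pq) * fsd * mu ^ 2 in
  (m * lp ^ 2 + n * lp) / (alpha * lp ^ 2 + beta * lp + gamma).

Definition N_s (fpd fps fsd lp ls pq pa : R) : R :=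
  let mu := mu_p fpd fps pa in
  let A := pq * fsd * (mu - 1) in
  let B := mu - lp in
  let C := (ls - pq * fsd) * mu + pq * fsd * lp in
  (lp * ls * A + (ls ^ 2 - ls) * B * (B + lp)) / (B * C).

Definition D_p (fpd fps fsd lp pq pa : R) : R :=
  (N_p fpd fps lp pa + N_sp fpd fps fsd lp pq pa) / lp.
Definition D_s (fpd fps fsd lp ls pq pa : R) : R :=
  N_s fpd fps fsd lp ls pq pa / ls.

Definition admissible (fpd fps fsd lp ls pq pa : R) : Prop :=
  0 <= pa <= 1 /\
  lp < fsd * (1 - pq) * mu_p fpd fps pa / (fsd * (1 - pq) + a_ fpd fps pa) /\
  ls < pq * fsd * (1 - lp / mu_p fpd fps pa).

(* With c = (1 - p_q) f_sd the denominator of N_sp factors as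
   (mu_p - lambda_p) (c mu_p - (c + a) lambda_p); afterwards both delays are short
   rational functions of a = p_a f_ps (1 - f_pd), resp. of mu_p = f_pd + a, which
   increase with p_a.  Their increments factor as

     D_p(a2) - D_p(a1) = (f_pd - c) (a2 - a1) k,
     D_s(mu2) - D_s(mu1) = - (mu2 - mu1) k',

   where k, k' are quotients of sums of products of quantities that are positive
   in the stable region, and f_pd - c has the sign of p_q - (1 - f_pd / f_sd). *)

From Stdlib Require Import Reals Lra.
Open Scope R_scope.

(* Here c = (1 - p_q) f_sd, and K > 0 is the first stability condition. *)
Definition pu_delay (f c l a : R) : R :=
  let mu := f + a in
  let K := c * mu - (c + a) * l in
  (1 - l) * (c + a) / K + (c - f) * a * l * (1 - mu) / (mu * (mu - l) * K).

Definition pu_stable (f c l a : R) : Prop :=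
  0 <= a /\ l < f + a < 1 /\ 0 < c * (f + a) - (c + a) * l.

(* Here P = p_q f_sd, and C > 0 is the second stability condition. *)
Definition su_delay (P l ls mu : R) : R :=
  let C := P * (mu - l) - ls * mu in
  (1 - ls) * mu / C + l * P * (1 - mu) / ((mu - l) * C).

Definition su_stable (P l ls mu : R) : Prop :=
  l < mu < 1 /\ ls * mu < P * (mu - l).

Lemma D_p_eq_pu_delay fpd fps fsd lp pq pa :
  0 < lp -> pu_stable fpd ((1 - pq) * fsd) lp (a_ fpd fps pa) ->
  D_p fpd fps fsd lp pq pa = pu_delay fpd ((1 - pq) * fsd) lp (a_ fpd fps pa).
Proof.
  intros Hl (Ha & Hmu & HK).
  unfold D_p, N_p, N_sp, pu_delay, mu_p; cbv zeta.
  set (a := a_ fpd fps pa) in *; set (c := (1 - pq) * fsd) in *.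
  replace ((c + a) * lp ^ 2 + (fpd + a) * (- 2 * (1 - pq) * fsd - a) * lp
           + c * (fpd + a) ^ 2)
    with ((fpd + a - lp) * (c * (fpd + a) - (c + a) * lp)) by (unfold c; ring).
  unfold c in *; field; repeat split; lra.
Qed.

Lemma D_s_eq_su_delay fpd fps fsd lp ls pq pa :
  0 < ls -> su_stable (pq * fsd) lp ls (mu_p fpd fps pa) ->
  D_s fpd fps fsd lp ls pq pa = su_delay (pq * fsd) lp ls (mu_p fpd fps pa).
Proof.
  intros Hls (Hmu & HC).
  unfold D_s, N_s, su_delay; cbv zeta.
  set (mu := mu_p fpd fps pa) in *.
  field; repeat split; lra.
Qed.

Lemma pu_delay_sub f c l a1 a2 :
  0 < c -> 0 < l < 1 -> pu_stable f c l a1 -> pu_stable f c l a2 ->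
  exists k, 0 < k /\
    pu_delay f c l a2 - pu_delay f c l a1 = (f - c) * (a2 - a1) * k.
Proof.
  intros Hc Hl (Ha1 & Hmu1 & HK1) (Ha2 & Hmu2 & HK2).
  unfold pu_delay; cbv zeta.
  set (mu1 := f + a1) in *; set (mu2 := f + a2) in *.
  set (K1 := c * mu1 - (c + a1) * l) in *; set (K2 := c * mu2 - (c + a2) * l) in *.
  exists ((c * mu2 * (mu2 - l) * ((mu1 - l) ^ 2 + a1 * l * (1 - mu1))
           + l * a2 * K1 * ((1 - l) - (1 - mu1) * (1 - mu2)))
          / (mu1 * mu2 * (mu1 - l) * (mu2 - l) * K1 * K2)).
  split.
  - assert (Hfirst : 0 < c * mu2 * (mu2 - l) * ((mu1 - l) ^ 2 + a1 * l * (1 - mu1))).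
    { assert (0 < c * mu2 * (mu2 - l)) by (repeat apply Rmult_lt_0_compat; lra).
      assert (0 <= a1 * l * (1 - mu1)) by (repeat apply Rmult_le_pos; lra).
      assert (0 < (mu1 - l) ^ 2) by (apply pow_lt; lra).
      apply Rmult_lt_0_compat; lra. }
    assert (Hsecond : 0 <= l * a2 * K1 * ((1 - l) - (1 - mu1) * (1 - mu2))).
    { assert ((1 - mu1) * (1 - mu2) <= 1 - mu1) by nra.
      repeat apply Rmult_le_pos; lra. }
    apply Rdiv_lt_0_compat; [lra|].
    assert (0 < mu1 * mu2 * (mu1 - l) * (mu2 - l)) by (repeat apply Rmult_lt_0_compat; lra).
    repeat apply Rmult_lt_0_compat; lra.
  - unfold K1, K2, mu1, mu2 in *; field; repeat split; lra.
Qed.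

Lemma su_delay_sub P l ls mu1 mu2 :
  0 < l -> 0 < P -> ls < 1 -> su_stable P l ls mu1 -> su_stable P l ls mu2 ->
  exists k, 0 < k /\ su_delay P l ls mu2 - su_delay P l ls mu1 = - (mu2 - mu1) * k.
Proof.
  intros Hl HP Hls (Hmu1 & HC1) (Hmu2 & HC2).
  unfold su_delay; cbv zeta.
  set (C1 := P * (mu1 - l) - ls * mu1); set (C2 := P * (mu2 - l) - ls * mu2).
  assert (HC1' : 0 < C1) by (unfold C1; lra).
  assert (HC2' : 0 < C2) by (unfold C2; lra).
  exists (l * P * ((1 - ls) * (mu1 - l) * (mu2 - l)
                   + (1 - mu1) * ((P - ls) * (mu2 - l) + C1) + (mu1 - l) * C1)
          / ((mu1 - l) * (mu2 - l) * C1 * C2)).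
  split.
  - assert (HPls : ls < P) by nra.
    apply Rdiv_lt_0_compat.
    + assert (0 < (1 - ls) * (mu1 - l) * (mu2 - l)) by (repeat apply Rmult_lt_0_compat; lra).
      assert (0 < (P - ls) * (mu2 - l)) by (apply Rmult_lt_0_compat; lra).
      assert (0 <= (1 - mu1) * ((P - ls) * (mu2 - l) + C1)) by (apply Rmult_le_pos; lra).
      assert (0 < (mu1 - l) * C1) by (apply Rmult_lt_0_compat; lra).
      apply Rmult_lt_0_compat; [nra | lra].
    + repeat apply Rmult_lt_0_compat; lra.
  - unfold C1, C2 in *; field; repeat split; lra.
Qed.

Lemma admissible_stable fpd fps fsd lp ls pq pa :
  0 < fpd < 1 -> 0 < fps < 1 -> 0 < fsd -> 0 < lp -> 0 < pq < 1 ->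
  admissible fpd fps fsd lp ls pq pa ->
  pu_stable fpd ((1 - pq) * fsd) lp (a_ fpd fps pa) /\
  su_stable (pq * fsd) lp ls (mu_p fpd fps pa).
Proof.
  intros Hf Hp Hs Hl Hq (Hpa & Hpu & Hsu).
  unfold pu_stable, su_stable, mu_p in *.
  set (a := a_ fpd fps pa) in *; set (c := (1 - pq) * fsd) in *.
  assert (Ha0 : 0 <= a) by (unfold a, a_; repeat apply Rmult_le_pos; lra).
  assert (Ha1 : a < 1 - fpd).
  { assert (pa * fps < 1) by nra.
    unfold a, a_; nra. }
  assert (Hc : 0 < c) by (unfold c; apply Rmult_lt_0_compat; lra).
  replace (fsd * (1 - pq)) with c in Hpu by (unfold c; ring).
  assert (HK : lp * (c + a) < c * (fpd + a)).
  { apply Rmult_lt_compat_r with (r := c + a) in Hpu; [|lra].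
    field_simplify in Hpu; lra. }
  assert (HY : lp < fpd + a) by nra.
  apply Rmult_lt_compat_r with (r := fpd + a) in Hsu; [|lra].
  replace (pq * fsd * (1 - lp / (fpd + a)) * (fpd + a))
    with (pq * fsd * (fpd + a - lp)) in Hsu by (field; lra).
  repeat split; lra.
Qed.

Lemma a_lt fpd fps pa1 pa2 :
  0 < fpd < 1 -> 0 < fps -> pa1 < pa2 -> a_ fpd fps pa1 < a_ fpd fps pa2.
Proof.
  intros Hf Hp H12; unfold a_.
  assert (0 < fps * (1 - fpd)) by (apply Rmult_lt_0_compat; lra).
  nra.
Qed.

Lemma pq_threshold fpd fsd pq :
  0 < fsd -> fpd - (1 - pq) * fsd = fsd * (pq - (1 - fpd / fsd)).
Proof. intros; field; lra. Qed.

Lemma D_p_sub fpd fps fsd lp ls pq pa1 pa2 :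
  0 < fpd < 1 -> 0 < fps < 1 -> 0 < fsd -> 0 < lp < 1 -> 0 < pq < 1 ->
  admissible fpd fps fsd lp ls pq pa1 -> admissible fpd fps fsd lp ls pq pa2 ->
  exists k, 0 < k /\
    D_p fpd fps fsd lp pq pa2 - D_p fpd fps fsd lp pq pa1
    = (fpd - (1 - pq) * fsd) * (a_ fpd fps pa2 - a_ fpd fps pa1) * k.
Proof.
  intros Hf Hp Hs Hl Hq A1 A2.
  destruct (admissible_stable _ _ _ _ _ _ _ Hf Hp Hs (proj1 Hl) Hq A1) as [S1 _].
  destruct (admissible_stable _ _ _ _ _ _ _ Hf Hp Hs (proj1 Hl) Hq A2) as [S2 _].
  rewrite !D_p_eq_pu_delay by (lra || assumption).
  apply pu_delay_sub; [apply Rmult_lt_0_compat; lra | lra | assumption | assumption].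
Qed.

Lemma D_s_decreasing fpd fps fsd lp ls pq pa1 pa2 :
  0 < fpd < 1 -> 0 < fps < 1 -> 0 < fsd -> 0 < lp -> 0 < ls < 1 -> 0 < pq < 1 ->
  admissible fpd fps fsd lp ls pq pa1 -> admissible fpd fps fsd lp ls pq pa2 ->
  pa1 < pa2 -> D_s fpd fps fsd lp ls pq pa2 < D_s fpd fps fsd lp ls pq pa1.
Proof.
  intros Hf Hp Hs Hl Hls Hq A1 A2 H12.
  destruct (admissible_stable _ _ _ _ _ _ _ Hf Hp Hs Hl Hq A1) as [_ S1].
  destruct (admissible_stable _ _ _ _ _ _ _ Hf Hp Hs Hl Hq A2) as [_ S2].
  rewrite !D_s_eq_su_delay by (lra || assumption).
  assert (HP : 0 < pq * fsd) by (apply Rmult_lt_0_compat; lra).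
  destruct (su_delay_sub _ _ _ _ _ Hl HP (proj2 Hls) S1 S2) as (k & Hk & E).
  assert (mu_p fpd fps pa1 < mu_p fpd fps pa2)
    by (unfold mu_p; pose proof (a_lt fpd fps pa1 pa2 Hf (proj1 Hp) H12); lra).
  nra.
Qed.

Theorem lemma4 (fpd fps fsd lp ls pq : R)
  (hfpd : 0 < fpd < 1) (hfps : 0 < fps < 1) (hfsd : 0 < fsd < 1)
  (hlt : fpd < fsd)
  (hlp : 0 < lp < 1) (hls : 0 < ls < 1) (hpq : 0 < pq < 1) :
  (pq < 1 - fpd / fsd ->
     forall pa1 pa2, admissible fpd fps fsd lp ls pq pa1 ->
       admissible fpd fps fsd lp ls pq pa2 -> pa1 < pa2 ->
       D_p fpd fps fsd lp pq pa2 < D_p fpd fps fsd lp pq pa1) /\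
  (pq > 1 - fpd / fsd ->
     forall pa1 pa2, admissible fpd fps fsd lp ls pq pa1 ->
       admissible fpd fps fsd lp ls pq pa2 -> pa1 < pa2 ->
       D_p fpd fps fsd lp pq pa1 < D_p fpd fps fsd lp pq pa2) /\
  (pq = 1 - fpd / fsd ->
     forall pa1 pa2, admissible fpd fps fsd lp ls pq pa1 ->
       admissible fpd fps fsd lp ls pq pa2 ->
       D_p fpd fps fsd lp pq pa1 = D_p fpd fps fsd lp pq pa2) /\
  (forall pa1 pa2, admissible fpd fps fsd lp ls pq pa1 ->
       admissible fpd fps fsd lp ls pq pa2 -> pa1 < pa2 ->
       D_s fpd fps fsd lp ls pq pa2 < D_s fpd fps fsd lp ls pq pa1).
Proof.
  assert (Hthreshold := pq_threshold fpd fsd pq (proj1 hfsd)).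
  assert (Hgap := fun pa1 pa2 => D_p_sub fpd fps fsd lp ls pq pa1 pa2
                                   hfpd hfps (proj1 hfsd) hlp hpq).
  split; [|split; [|split]].
  - intros Hq pa1 pa2 A1 A2 H12.
    destruct (Hgap pa1 pa2 A1 A2) as (k & Hk & E).
    pose proof (a_lt fpd fps pa1 pa2 hfpd (proj1 hfps) H12).
    assert (0 < (a_ fpd fps pa2 - a_ fpd fps pa1) * k) by (apply Rmult_lt_0_compat; lra).
    assert (fpd - (1 - pq) * fsd < 0) by nra.
    nra.
  - intros Hq pa1 pa2 A1 A2 H12.
    destruct (Hgap pa1 pa2 A1 A2) as (k & Hk & E).
    pose proof (a_lt fpd fps pa1 pa2 hfpd (proj1 hfps) H12).
    assert (0 < (a_ fpd fps pa2 - a_ fpd fps pa1) * k) by (apply Rmult_lt_0_compat; lra).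
    assert (0 < fpd - (1 - pq) * fsd) by nra.
    nra.
  - intros Hq pa1 pa2 A1 A2.
    destruct (Hgap pa1 pa2 A1 A2) as (k & Hk & E).
    assert (fpd - (1 - pq) * fsd = 0) by (rewrite Hthreshold, Hq; ring).
    nra.
  - intros pa1 pa2.
    apply D_s_decreasing; lra.
Qed.
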